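(* Let $n$ be even. The map $\mathrm{Sm}(v_0,\dots,v_n)=2^{-(n+1)}\sum_{\sigma_0,\dots,\sigma_n\in\{\pm1\}}S(\sigma_0v_0,\dots,\sigma_nv_n)$ descends to a map $(\mathbb{P}(\mathbb{R}^n))^{n+1}\to\mathbb{R}_\varepsilon$ which is $\mathrm{GL}_n(\mathbb{R})$-equivariant (i.e. $\mathrm{Sm}(gv_0,\dots,gv_n)=\operatorname{sign}(\det g)\mathrm{Sm}(v_0,\dots,v_n)$), and its coboundary $d\,\mathrm{Sm}$ vanishes on all hereditarily spanning $(n+2)$-tuples.
   Context: $\mathrm{Or}(v_1,\dots,v_n)=\operatorname{sign}\det(v_1,\dots,v_n)$ (zero if not a basis). $S:(\mathbb{R}^n)^{n+1}\to\{-1,0,1\}$ is defined by $S(v_0,\dots,v_n)=0$ if $0$ is not in the interior of the convex hull of $v_0,\dots,v_n$, and otherwise $S(v_0,\dots,v_n)=(-1)^i\mathrm{Or}(v_0,\dots,\widehat{v_i},\dots,v_n)$ for any $i$ (independent of $i$). $\mathbb{R}_\varepsilon$ is $\mathbb{R}$ with $g$ acting by $\operatorname{sign}\det g$. A tuple is hereditarily spanning if any $n$ of its entries span $\mathbb{R}^n$. $d$ is the alternating sum of omissions of variables. *)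

(* Vectors of R^n are column vectors 'cV[R]_n over an
   arbitrary real field R (the paper uses R = the reals). *)
From HB Require Import structures.
From mathcomp Require Import all_boot all_order all_algebra.
From Stdlib Require Import ClassicalEpsilon.
Set Implicit Arguments. Unset Strict Implicit. Unset Printing Implicit Defensive.
Import Order.TTheory GRing.Theory Num.Theory.
Local Open Scope ring_scope.

Section Defs.
Variable R : realFieldType.

Definition omit (T : Type) (k : nat) (i : 'I_k.+1) (v : 'I_k.+1 -> T) : 'I_k -> T :=
  fun j => v (lift i j).

Definition Or (n : nat) (w : 'I_n -> 'cV[R]_n) : R :=
  Num.sg (\det (\matrix_(i < n, j < n) w j i 0)).

Definition in_conv (n k : nat) (v : 'I_k -> 'cV[R]_n) (x : 'cV[R]_n) : Prop :=
  exists l : 'I_k -> R,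
    (forall i, 0 <= l i) /\ \sum_(i < k) l i = 1 /\ x = \sum_(i < k) l i *: v i.

(* x lies in the (topological) interior of the convex hull; the topology of
   R^n is the product (sup-norm) topology *)
Definition in_interior_conv (n k : nat) (v : 'I_k -> 'cV[R]_n) (x : 'cV[R]_n) : Prop :=
  exists e : R, 0 < e /\
    forall y : 'cV[R]_n, (forall i, `|y i 0 - x i 0| < e) -> in_conv v y.

(* S(v_0,...,v_n) = 0 if 0 is not in the interior of the convex hull,
   otherwise (-1)^0 Or(v_1,...,v_n) (the choice i = 0). *)
Definition Ssimp (n : nat) (v : 'I_n.+1 -> 'cV[R]_n) : R :=
  if excluded_middle_informative (in_interior_conv v 0) then Or (omit ord0 v)
  else 0.

Definition Sm (n : nat) (v : 'I_n.+1 -> 'cV[R]_n) : R :=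
  (2 ^+ n.+1)^-1 *
  \sum_(s : {ffun 'I_n.+1 -> bool}) Ssimp (fun i => (if s i then -1 else 1) *: v i).

Definition hereditarily_spanning (n k : nat) (v : 'I_k -> 'cV[R]_n) : Prop :=
  forall f : 'I_n -> 'I_k, injective f ->
    row_full (\matrix_(i < n) (v (f i))^T).

Definition cobound (n k : nat) (F : ('I_k -> 'cV[R]_n) -> R)
    (v : 'I_k.+1 -> 'cV[R]_n) : R :=
  \sum_(i < k.+1) (-1) ^+ i * F (omit i v).
End Defs.

(* Invertible linear maps and positive rescalings preserve the condition "0 lies in
   the interior of the convex hull", so S transforms by sign det g and is invariant under
   positive rescalings; averaging over all sign changes then makes Sm invariant under all
   nonzero rescalings.

   For a hereditarily spanning (v_0, ..., v_n), Cramer's rule gives the linear relation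
   sum_k (-1)^k det(v_0, .., ^v_k, .., v_n) v_k = 0, which spans all relations, so 0 is
   interior to the hull iff its coefficients all have the same sign, and S is that sign.
   For a hereditarily spanning (v_0, ..., v_(n+1)), the Cramer relations of the tuples
   with v_i omitted form an antisymmetric matrix G satisfying the three-term Plücker
   relations, and (-1)^i S(v_0, .., ^v_i, .., v_(n+1)) is 1, -1 or 0 according as row i
   of G is positive off the diagonal (i is a source of the tournament G), negative (a
   sink) or neither. The Plücker relations force a source to exist iff a sink does, and
   there is at most one of each, so dS = 0; finally dSm is an average of dS over sign
   changes. *)

From HB Require Import structures.
From mathcomp Require Import all_boot all_order all_algebra zify lra.
From Stdlib Require Import ClassicalEpsilon FunctionalExtensionality.
Set Implicit Arguments. Unset Strict Implicit. Unset Printing Implicit Defensive.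
Import Order.TTheory GRing.Theory Num.Theory.
Local Open Scope ring_scope.

(** * Convex hulls *)

Section Convexity.
Variables (R : realFieldType) (n : nat).
Implicit Types (k : nat) (x y : 'cV[R]_n).

Lemma conv_weight_le1 k (l : 'I_k -> R) i :
  (forall j, 0 <= l j) -> \sum_j l j = 1 -> l i <= 1.
Proof. by move=> l0 <-; rewrite (bigD1 i) //= lerDl sumr_ge0. Qed.

Lemma in_interior_conv_in_conv k (v : 'I_k -> 'cV[R]_n) x :
  in_interior_conv v x -> in_conv v x.
Proof. by case=> e [e0 He]; apply: He => i; rewrite subrr normr0. Qed.

Lemma in_conv_normalize k (u : 'I_k -> 'cV[R]_n) (a : 'I_k -> R) :
  (forall j, 0 <= a j) -> 0 < \sum_j a j ->
  in_conv u ((\sum_j a j)^-1 *: \sum_j a j *: u j).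
Proof.
move=> a0 sa; exists (fun j => (\sum_j a j)^-1 * a j); split.
  by move=> j; rewrite mulr_ge0 // invr_ge0 ltW.
split; first by rewrite -mulr_sumr mulVf // gt_eqF.
by rewrite scaler_sumr; apply: eq_bigr => j _; rewrite scalerA.
Qed.

(* The missing weight [1 - \sum_j a j] is spread along a convex representation of 0. *)
Lemma in_conv0_combination k (u : 'I_k -> 'cV[R]_n) (a : 'I_k -> R) :
  in_conv u 0 -> (forall j, 0 <= a j) -> \sum_j a j <= 1 ->
  in_conv u (\sum_j a j *: u j).
Proof.
case=> l [l0 [l1 lu]] a0 sa.
exists (fun j => a j + (1 - \sum_j a j) * l j); split.
  by move=> j; rewrite addr_ge0 // mulr_ge0 // subr_ge0.
split; first by rewrite big_split /= -mulr_sumr l1 mulr1 addrC subrK.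
under [RHS]eq_bigr => j _ do rewrite scalerDl -scalerA.
by rewrite big_split /= -scaler_sumr -lu scaler0 addr0.
Qed.

Lemma in_conv_mulmx k (A : 'M[R]_n) (v : 'I_k -> 'cV[R]_n) x :
  in_conv v x -> in_conv (fun i => A *m v i) (A *m x).
Proof.
case=> l [l0 [l1 ->]]; exists l; do 2!split => //.
by rewrite mulmx_sumr; apply: eq_bigr => i _; rewrite scalemxAr.
Qed.

Definition mx_l1norm m p (B : 'M[R]_(m, p)) : R := \sum_i \sum_j `|B i j|.

Lemma mx_l1norm_ge0 m p (B : 'M[R]_(m, p)) : 0 <= mx_l1norm B.
Proof. by apply: sumr_ge0 => i _; apply: sumr_ge0. Qed.

Lemma norm_mulmx_entry_le m (B : 'M[R]_(m, n)) y (e : R) :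
  0 <= e -> (forall j, `|y j 0| <= e) ->
  forall i, `|(B *m y) i 0| <= mx_l1norm B * e.
Proof.
move=> e0 ye i; rewrite mxE; apply: le_trans (ler_norm_sum _ _ _) _.
apply: (@le_trans _ _ (\sum_j `|B i j| * e)).
  by apply: ler_sum => j _; rewrite normrM ler_wpM2l.
rewrite -mulr_suml ler_wpM2r // /mx_l1norm (bigD1 i) //= lerDl.
by apply: sumr_ge0 => ? _; apply: sumr_ge0.
Qed.

Lemma in_interior_conv_mulmx k (A : 'M[R]_n) (v : 'I_k -> 'cV[R]_n) x :
  A \in unitmx -> in_interior_conv v x ->
  in_interior_conv (fun i => A *m v i) (A *m x).
Proof.
move=> Au [e [e0 He]]; set B := invmx A; set N := mx_l1norm B + 1.
have N0 : 0 < N by rewrite ltr_wpDl ?mx_l1norm_ge0.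
exists (e / N); split=> [|y hy]; first by rewrite divr_gt0.
rewrite -[y](mulKVmx Au); apply: in_conv_mulmx; apply: He => i.
have -> : (B *m y) i 0 - x i 0 = (B *m (y - A *m x)) i 0.
  by rewrite /B mulmxBr mulKmx // !mxE.
apply: le_lt_trans (@norm_mulmx_entry_le _ B _ (e / N) _ _ i) _.
- by rewrite divr_ge0 ?ltW.
- by move=> j; have := hy j; rewrite !mxE => /ltW.
by rewrite mulrA ltr_pdivrMr // mulrC ltr_pM2l // ltrDl.
Qed.

Lemma in_conv0_scale_pos k (v : 'I_k -> 'cV[R]_n) (c : 'I_k -> R) :
  (forall i, 0 < c i) -> in_conv v 0 -> in_conv (fun i => c i *: v i) 0.
Proof.
move=> c0 [l [l0 [l1 lv]]].
have a0 j : 0 <= l j / c j by rewrite divr_ge0 // ltW.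
have sa : 0 < \sum_j l j / c j.
  rewrite lt_def sumr_ge0 // andbT; apply/eqP => /(psumr_eq0P (fun j _ => a0 j)) l0c.
  move: l1; rewrite big1 => [/eqP|j _]; first by rewrite eq_sym oner_eq0.
  by have /eqP := l0c j isT; rewrite mulf_eq0 invr_eq0 (gt_eqF (c0 j)) orbF => /eqP.
have := in_conv_normalize (fun i => c i *: v i) a0 sa.
congr in_conv; rewrite (eq_bigr (fun j => l j *: v j)) -?lv ?scaler0 // => j _.
by rewrite scalerA divfK // gt_eqF.
Qed.

(* If [K *: y] is a convex combination of the [v j], with [K = 1 + \sum_j (c j)^-1],
   then [y] is a combination of the [c j *: v j] of total weight at most 1. *)
Lemma in_interior_conv0_scale_pos k (v : 'I_k -> 'cV[R]_n) (c : 'I_k -> R) :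
  (forall i, 0 < c i) -> in_interior_conv v 0 ->
  in_interior_conv (fun i => c i *: v i) 0.
Proof.
move=> c0 hv; have [e [e0 He]] := hv.
have ic0 j : 0 <= (c j)^-1 by rewrite invr_ge0 ltW.
set K := 1 + \sum_j (c j)^-1.
have K0 : 0 < K by rewrite ltr_wpDr ?sumr_ge0.
exists (e / K); split=> [|y hy]; first by rewrite divr_gt0.
have [l [l0 [l1 Ky]]] : in_conv v (K *: y).
  apply: He => i; rewrite !mxE subr0 normrM gtr0_norm // mulrC -ltr_pdivlMr //.
  by have := hy i; rewrite !mxE subr0.
have -> : y = \sum_j (K^-1 * (l j / c j)) *: (c j *: v j).
  rewrite -[y](scalerK (negbT (gt_eqF K0))) Ky scaler_sumr; apply: eq_bigr => j _.
  by rewrite !scalerA mulrA divfK // gt_eqF.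
apply: in_conv0_combination.
- exact/in_conv0_scale_pos/in_interior_conv_in_conv.
- by move=> j; rewrite mulr_ge0 ?invr_ge0 ?(ltW K0) // divr_ge0 ?(ltW (c0 j)).
rewrite -mulr_sumr ler_pdivrMl // mulr1 /K ler_wpDl // ler_sum // => j _.
by rewrite ler_piMl // conv_weight_le1.
Qed.

Lemma in_conv_perturb k (u : 'I_k -> 'cV[R]_n) (d b : 'I_k -> R) (e r : R) :
  0 <= e -> (forall j, e <= d j) -> \sum_j d j = 1 -> \sum_j d j *: u j = 0 ->
  (forall j, `|b j| <= r) -> k.+1%:R * r <= e ->
  in_conv u (\sum_j b j *: u j).
Proof.
move=> e0 de d1 du br kr; set sb := \sum_j b j.
have d0 j : 0 <= d j := le_trans e0 (de j).
have sbr : `|sb| <= k%:R * r.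
  apply: le_trans (ler_norm_sum _ _ _) _.
  by apply: le_trans (ler_sum _ (fun j _ => br j)) _; rewrite sumr_const card_ord mulr_natl.
exists (fun j => d j * (1 - sb) + b j); split; last split.
- move=> j; have dsb : d j * sb <= `|sb|.
    apply: le_trans (ler_norm _) _; rewrite normrM ger0_norm //.
    by rewrite ler_piMl // conv_weight_le1.
  have := lerNnormlW (br j); have := de j; rewrite -natr1 in kr; lra.
- by rewrite big_split /= -mulr_suml d1 mul1r subrK.
- under [RHS]eq_bigr => j _ do rewrite scalerDl mulrC -scalerA.
  by rewrite big_split /= -scaler_sumr du scaler0 add0r.
Qed.
End Convexity.

(** * Equivariance of S and Sm *)

Section ColumnMatrix.
Variable R : realFieldType.

Definition colsmx n (u : 'I_n -> 'cV[R]_n) : 'M[R]_n := \matrix_(i, j) u j i 0.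

Lemma OrE n (u : 'I_n -> 'cV[R]_n) : Or u = Num.sg (\det (colsmx u)).
Proof. by []. Qed.

Lemma mulmx_colsmx n (u : 'I_n -> 'cV[R]_n) (x : 'cV[R]_n) :
  colsmx u *m x = \sum_j x j 0 *: u j.
Proof.
apply/matrixP => i z; rewrite (ord1 z) !mxE summxE.
by apply: eq_bigr => j _; rewrite !mxE mulrC.
Qed.

Lemma colsmx_mulmx n (A : 'M[R]_n) (u : 'I_n -> 'cV[R]_n) :
  colsmx (fun j => A *m u j) = A *m colsmx u.
Proof.
by apply/matrixP => i j; rewrite !mxE; apply: eq_bigr => k _; rewrite !mxE.
Qed.

Lemma det_colsmx_scale n (c : 'I_n -> R) (u : 'I_n -> 'cV[R]_n) :
  \det (colsmx (fun j => c j *: u j)) = \det (colsmx u) * \prod_j c j.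
Proof.
have -> : colsmx (fun j => c j *: u j) = colsmx u *m diag_mx (\row_j c j).
  by apply/matrixP => i j; rewrite mul_mx_diag !mxE mulrC.
by rewrite det_mulmx det_diag; under eq_bigr => j _ do rewrite mxE.
Qed.

Lemma det_colsmx_relation_eq0 n (u : 'I_n -> 'cV[R]_n) (x : 'I_n -> R) :
  \det (colsmx u) != 0 -> \sum_j x j *: u j = 0 -> forall j, x j = 0.
Proof.
move=> du ux j; have uU : colsmx u \in unitmx by rewrite unitmxE unitfE.
have : colsmx u *m \col_j x j = 0.
  by rewrite mulmx_colsmx -[RHS]ux; apply: eq_bigr => i _; rewrite mxE.
move/(congr1 (mulmx (invmx (colsmx u)))); rewrite mulKmx // mulmx0.
by move/matrixP/(_ j 0); rewrite !mxE.
Qed.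

Lemma Or_mulmx n (A : 'M[R]_n) (u : 'I_n -> 'cV[R]_n) :
  Or (fun j => A *m u j) = Num.sg (\det A) * Or u.
Proof. by rewrite !OrE colsmx_mulmx det_mulmx sgrM. Qed.

Lemma Or_scale_pos n (c : 'I_n -> R) (u : 'I_n -> 'cV[R]_n) :
  (forall j, 0 < c j) -> Or (fun j => c j *: u j) = Or u.
Proof.
move=> c0; rewrite !OrE det_colsmx_scale sgrM.
by rewrite (gtr0_sg (prodr_gt0 _ (fun j _ => c0 j))) mulr1.
Qed.
End ColumnMatrix.

Section Invariance.
Variables (R : realFieldType) (n : nat).

Lemma in_interior_conv0_mulmxE k (A : 'M[R]_n) (v : 'I_k -> 'cV[R]_n) :
  A \in unitmx -> in_interior_conv (fun i => A *m v i) 0 <-> in_interior_conv v 0.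
Proof.
move=> Au; split=> [|hv]; last by have := in_interior_conv_mulmx Au hv; rewrite mulmx0.
have iAu : invmx A \in unitmx by rewrite unitmx_inv.
move/(in_interior_conv_mulmx iAu); rewrite mulmx0.
by congr in_interior_conv; apply: functional_extensionality => i; rewrite mulKmx.
Qed.

Lemma in_interior_conv0_scale_posE k (c : 'I_k -> R) (v : 'I_k -> 'cV[R]_n) :
  (forall i, 0 < c i) ->
  in_interior_conv (fun i => c i *: v i) 0 <-> in_interior_conv v 0.
Proof.
move=> c0; split=> [|]; last exact: in_interior_conv0_scale_pos.
move/(in_interior_conv0_scale_pos (c := fun i => (c i)^-1)).
have -> : (fun i => (c i)^-1 *: (c i *: v i)) = v.
  by apply: functional_extensionality => i; rewrite scalerA mulVf ?scale1r // gt_eqF.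
by apply => i; rewrite invr_gt0.
Qed.

Lemma Ssimp_mulmx (A : 'M[R]_n) (v : 'I_n.+1 -> 'cV[R]_n) : A \in unitmx ->
  Ssimp (fun i => A *m v i) = Num.sg (\det A) * Ssimp v.
Proof.
move=> Au; rewrite /Ssimp.
case: excluded_middle_informative => hAv; case: excluded_middle_informative => hv.
- exact: Or_mulmx.
- by case: hv; apply/(in_interior_conv0_mulmxE _ Au).
- by case: hAv; apply/in_interior_conv0_mulmxE.
- by rewrite mulr0.
Qed.

Lemma Ssimp_scale_pos (c : 'I_n.+1 -> R) (v : 'I_n.+1 -> 'cV[R]_n) :
  (forall i, 0 < c i) -> Ssimp (fun i => c i *: v i) = Ssimp v.
Proof.
move=> c0; rewrite /Ssimp.
case: excluded_middle_informative => hcv; case: excluded_middle_informative => hv.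
- by apply: Or_scale_pos => j; apply: c0.
- by case: hv; apply/(in_interior_conv0_scale_posE _ c0).
- by case: hcv; apply/in_interior_conv0_scale_posE.
- by [].
Qed.

Definition sign_change k (s : {ffun 'I_k -> bool}) (v : 'I_k -> 'cV[R]_n) :
  'I_k -> 'cV[R]_n := fun i => (if s i then -1 else 1) *: v i.

Lemma SmE (v : 'I_n.+1 -> 'cV[R]_n) :
  Sm v = (2 ^+ n.+1)^-1 * \sum_s Ssimp (sign_change s v).
Proof. by []. Qed.

Lemma Sm_mulmx (A : 'M[R]_n) (v : 'I_n.+1 -> 'cV[R]_n) : A \in unitmx ->
  Sm (fun i => A *m v i) = Num.sg (\det A) * Sm v.
Proof.
move=> Au; rewrite !SmE mulrCA [in RHS]mulr_sumr; congr (_ * _); apply: eq_bigr => s _.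
rewrite -Ssimp_mulmx //; congr Ssimp; apply: functional_extensionality => i.
by rewrite /sign_change scalemxAr.
Qed.

Lemma sign_scale (b : bool) (x : R) : x != 0 ->
  (if b then -1 else 1) * x = `|x| * (if b (+) (x < 0) then -1 else 1).
Proof.
move=> x0; have [xlt0|xgt0|/eqP] := ltgtP x 0; last by rewrite (negPf x0).
  by rewrite ltr0_norm //; case: b; rewrite /= ?mulN1r ?mul1r ?mulrN1 ?mulr1 ?opprK.
by rewrite gtr0_norm //; case: b; rewrite /= ?mulN1r ?mul1r ?mulrN1 ?mulr1.
Qed.

Lemma Sm_scale (c : 'I_n.+1 -> R) (v : 'I_n.+1 -> 'cV[R]_n) :
  (forall i, c i != 0) -> Sm (fun i => c i *: v i) = Sm v.
Proof.
(* absorb the signs of [c] into the sign changes *)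
move=> c0; pose h (s : {ffun 'I_n.+1 -> bool}) := [ffun i => s i (+) (c i < 0)].
have hK : involutive h by move=> s; apply/ffunP => i; rewrite !ffunE addbK.
rewrite !SmE [in RHS](reindex_inj (inv_inj hK)); congr (_ * _); apply: eq_bigr => s _.
rewrite -[RHS](@Ssimp_scale_pos (fun i => `|c i|)) => [|i]; last by rewrite normr_gt0.
congr Ssimp; apply: functional_extensionality => i.
by rewrite /sign_change ffunE !scalerA sign_scale.
Qed.
End Invariance.

(** * Cramer relations *)

Section Cramer.
Variables (R : realFieldType) (n : nat).

Definition cramer_coef (w : 'I_n.+1 -> 'cV[R]_n) (k : 'I_n.+1) : R :=
  (-1) ^+ k * \det (colsmx (omit k w)).

(* Expand along its first row the singular matrix whose first row repeats row [r]. *)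
Lemma cramer_relation (w : 'I_n.+1 -> 'cV[R]_n) : \sum_k cramer_coef w k *: w k = 0.
Proof.
apply/matrixP => r z; rewrite (ord1 z) summxE mxE.
pose M := \matrix_(a < n.+1, k < n.+1)
  (if unlift ord0 a is Some a' then w k a' 0 else w k r 0).
have M0 : \det M = 0.
  apply: (@determinant_alternate _ _ M ord0 (lift ord0 r)); first exact: neq_lift.
  by move=> k; rewrite !mxE unlift_none liftK.
rewrite -[RHS]M0 (expand_det_row M ord0); apply: eq_bigr => k _.
rewrite mxE [M ord0 k]mxE unlift_none /cofactor add0n mulrC; congr (_ * (_ * \det _)).
by apply/matrixP => a b; rewrite !mxE liftK.
Qed.

Lemma cramer_relation_unique (w : 'I_n.+1 -> 'cV[R]_n) (rho : 'I_n.+1 -> R) :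
  \det (colsmx (omit ord0 w)) != 0 -> \sum_k rho k *: w k = 0 ->
  forall k, rho k = rho ord0 / cramer_coef w ord0 * cramer_coef w k.
Proof.
move=> dW rw; set t := rho ord0 / cramer_coef w ord0.
have c0 : cramer_coef w ord0 != 0 by rewrite /cramer_coef expr0 mul1r.
pose x k := rho k - t * cramer_coef w k.
have xw : \sum_k x k *: w k = 0.
  under eq_bigr => k _ do rewrite /x scalerBl -scalerA.
  by rewrite sumrB rw -scaler_sumr cramer_relation scaler0 subr0.
have x0 : x ord0 = 0 by rewrite /x divfK // subrr.
move: xw; rewrite big_ord_recl x0 scale0r add0r => /(det_colsmx_relation_eq0 dW) xl k.
apply/eqP; rewrite -subr_eq0; apply/eqP.
by case: (unliftP ord0 k) => [j ->|->]; [exact: xl | exact: x0].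
Qed.

Lemma hereditarily_spanningP k (v : 'I_k -> 'cV[R]_n) :
  hereditarily_spanning v <->
  forall f : 'I_n -> 'I_k, injective f -> \det (colsmx (fun a => v (f a))) != 0.
Proof.
have vf f : \matrix_(a < n) (v (f a))^T = (colsmx (fun a => v (f a)))^T.
  by apply/matrixP => a b; rewrite !mxE.
by split=> hv f /hv; rewrite vf row_full_unit unitmxE unitfE det_tr.
Qed.

Lemma hereditarily_spanning_omit k (v : 'I_k.+1 -> 'cV[R]_n) i :
  hereditarily_spanning v -> hereditarily_spanning (omit i v).
Proof. by move=> hv f finj; apply: hv => a b /lift_inj/finj. Qed.

Lemma hereditarily_spanning_scale k (c : 'I_k -> R) (v : 'I_k -> 'cV[R]_n) :
  (forall i, c i != 0) -> hereditarily_spanning v ->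
  hereditarily_spanning (fun i => c i *: v i).
Proof.
move=> c0 /hereditarily_spanningP hv; apply/hereditarily_spanningP => f finj.
by rewrite (det_colsmx_scale (fun a => c (f a))) mulf_neq0 ?hv //; apply/prodf_neq0.
Qed.

Lemma det_colsmx_omit_neq0 (w : 'I_n.+1 -> 'cV[R]_n) k :
  hereditarily_spanning w -> \det (colsmx (omit k w)) != 0.
Proof. by move/hereditarily_spanningP; apply; exact: lift_inj. Qed.

Lemma cramer_coef_neq0 (w : 'I_n.+1 -> 'cV[R]_n) k :
  hereditarily_spanning w -> cramer_coef w k != 0.
Proof. by move=> hw; rewrite mulf_neq0 ?signr_eq0 ?det_colsmx_omit_neq0. Qed.

(* Perturb the positive relation by the coordinates of [y] in the basis [omit ord0 w];
   each normalized weight is at least their product, as all lie in (0, 1]. *)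
Lemma in_interior_conv0_pos_relation (w : 'I_n.+1 -> 'cV[R]_n) (d : 'I_n.+1 -> R) :
  \det (colsmx (omit ord0 w)) != 0 -> (forall k, 0 < d k) ->
  \sum_k d k *: w k = 0 -> in_interior_conv w 0.
Proof.
move=> dW d0 dw; set D := \sum_k d k.
have D0 : 0 < D by rewrite /D (bigD1 ord0) //= ltr_pwDl // sumr_ge0 // => k _; apply: ltW.
pose del k := d k / D.
have del0 k : 0 < del k by rewrite divr_gt0.
have del1 : \sum_k del k = 1 by rewrite -mulr_suml mulfV ?gt_eqF.
have delw : \sum_k del k *: w k = 0.
  under eq_bigr => k _ do rewrite /del mulrC -scalerA.
  by rewrite -scaler_sumr dw scaler0.
set P := \prod_k del k.
have P0 : 0 < P by apply: prodr_gt0 => k _.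
have Pdel k : P <= del k.
  rewrite /P (bigD1 k) //=; apply: ler_piMr; [exact: ltW | apply: prodr_ile1 => j _].
  by rewrite ltW //= conv_weight_le1 // => i; apply: ltW.
set W := colsmx (omit ord0 w).
have WU : W \in unitmx by rewrite unitmxE unitfE.
set N := mx_l1norm (invmx W) + 1.
have N0 : 0 < N by rewrite ltr_wpDl ?mx_l1norm_ge0.
have nN0 : n.+2%:R * N != 0 by rewrite mulf_neq0 ?pnatr_eq0 ?gt_eqF.
set e := P / (n.+2%:R * N).
have e0 : 0 < e by rewrite divr_gt0 // mulr_gt0.
exists e; split => // y hy.
set b := invmx W *m y.
pose b' k := if unlift ord0 k is Some j then b j 0 else 0.
have -> : y = \sum_k b' k *: w k.
  rewrite big_ord_recl /b' unlift_none scale0r add0r -[y](mulKVmx WU) mulmx_colsmx.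
  by apply: eq_bigr => j _; rewrite liftK.
apply: (in_conv_perturb (e := P) (r := N * e)) => //; first exact: ltW.
- move=> k; rewrite /b'; case: unlift => [j|]; last by rewrite normr0 mulr_ge0 ?ltW.
  apply: le_trans (norm_mulmx_entry_le _ (ltW e0) _ j) _.
    by move=> i; have := hy i; rewrite mxE subr0 => /ltW.
  by rewrite ler_wpM2r ?(ltW e0) // lerDl.
- by rewrite mulrA /e mulrCA mulfV ?mulr1.
Qed.

Lemma cramer_coef_sg (w : 'I_n.+1 -> 'cV[R]_n) :
  (forall k, cramer_coef w k != 0) -> in_interior_conv w 0 ->
  forall k, Num.sg (cramer_coef w k) = Num.sg (cramer_coef w ord0).
Proof.
move=> c0 /in_interior_conv_in_conv [mu [mu0 [mu1 muw]]].
have dW : \det (colsmx (omit ord0 w)) != 0.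
  by have := c0 ord0; rewrite /cramer_coef expr0 mul1r.
have := cramer_relation_unique dW (esym muw).
set t := mu ord0 / cramer_coef w ord0 => mut.
have t0 : t != 0.
  apply/eqP => t0; move: mu1; rewrite big1 => [/eqP|j _].
    by rewrite eq_sym oner_eq0.
  by rewrite mut t0 mul0r.
have sgt j : Num.sg t * Num.sg (cramer_coef w j) = 1.
  by rewrite -sgrM -mut gtr0_sg // lt_def mu0 andbT mut mulf_neq0.
by move=> k; apply: (@mulfI _ (Num.sg t)); rewrite ?sgr_eq0 ?sgt.
Qed.
End Cramer.

Section SignPattern.
Variables (R : realDomainType) (I : finType).
Implicit Type c : I -> R.

Definition sign_pattern c : R := [forall k, 0 < c k]%:R - [forall k, c k < 0]%:R.

Lemma sign_pattern_sg c k0 : c k0 != 0 ->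
  (forall k, Num.sg (c k) = Num.sg (c k0)) -> sign_pattern c = Num.sg (c k0).
Proof.
move=> ck0 hc; rewrite /sign_pattern.
have [neg|pos|/eqP] := ltgtP (c k0) 0; last by rewrite (negPf ck0).
- have -> : [forall k, 0 < c k] = false.
    by apply/negbTE/forallPn; exists k0; rewrite -leNgt ltW.
  have -> : [forall k, c k < 0].
    by apply/forallP => k; rewrite -(sgr_cp0 _).1.2 hc (sgr_cp0 _).1.2.
  by rewrite ltr0_sg // sub0r.
- have -> : [forall k, c k < 0] = false.
    by apply/negbTE/forallPn; exists k0; rewrite -leNgt ltW.
  have -> : [forall k, 0 < c k].
    by apply/forallP => k; rewrite -(sgr_cp0 _).1.1 hc (sgr_cp0 _).1.1.
  by rewrite gtr0_sg // subr0.
Qed.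

Lemma sign_patternN c : sign_pattern (fun k => - c k) = - sign_pattern c.
Proof.
by rewrite /sign_pattern opprB (eq_forallb (fun k => oppr_gt0 (c k)))
  (eq_forallb (fun k => oppr_lt0 (c k))).
Qed.

Lemma sign_pattern_signr (m : nat) c :
  sign_pattern (fun k => (-1) ^+ m * c k) = (-1) ^+ m * sign_pattern c.
Proof.
rewrite -signr_odd; case: (odd m); rewrite ?expr1 ?expr0 ?mulN1r ?mul1r -?sign_patternN;
  by congr sign_pattern; apply: functional_extensionality => k; rewrite ?mulN1r ?mul1r.
Qed.
End SignPattern.

Lemma Ssimp_cramer (R : realFieldType) n (w : 'I_n.+1 -> 'cV[R]_n) :
  hereditarily_spanning w -> Ssimp w = sign_pattern (cramer_coef w).
Proof.
move=> hw; have c0 k := cramer_coef_neq0 k hw.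
have dW := det_colsmx_omit_neq0 ord0 hw.
rewrite /Ssimp; case: excluded_middle_informative => hint.
  rewrite (sign_pattern_sg (c0 ord0)); last exact: cramer_coef_sg.
  by rewrite OrE /cramer_coef expr0 mul1r.
rewrite /sign_pattern; case: (boolP [forall k, 0 < _]) => [/forallP pos|_].
  by case: hint; apply: in_interior_conv0_pos_relation dW pos (cramer_relation w).
case: (boolP [forall k, _ < 0]) => [/forallP neg|_]; last by rewrite subrr.
case: hint; apply: (in_interior_conv0_pos_relation (d := fun k => - cramer_coef w k) dW).
  by move=> k; rewrite oppr_gt0.
by under eq_bigr => k _ do rewrite scaleNr; rewrite sumrN cramer_relation oppr0.
Qed.

(** * Plücker relations and tournaments *)

Lemma lift_lift_swap N (i j : 'I_N.+2) (k k' : 'I_N.+1) (a : 'I_N) :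
  lift i k = j -> lift j k' = i -> lift i (lift k a) = lift j (lift k' a).
Proof.
move=> <- /(congr1 val) ji; apply: val_inj; move: ji => /=.
by rewrite /bump; do 5?case: leqP => /=; lia.
Qed.

Lemma odd_lift_swap N (i j : 'I_N.+2) (k k' : 'I_N.+1) :
  lift i k = j -> lift j k' = i -> odd (i + k + (j + k')).
Proof.
move=> <- /(congr1 val) /=; rewrite /bump => ji.
suff -> : (i + k + ((i <= k) + k + k') = (k + k').*2.+1)%N by rewrite /= odd_double.
by move: ji; rewrite -!mul2n; do 2?case: leqP => /=; lia.
Qed.

Lemma signr_oddD (R : pzRingType) (a b : nat) :
  odd (a + b) -> (-1) ^+ a = - (-1) ^+ b :> R.
Proof.
rewrite -signr_odd -(signr_odd _ b) oddD.
by case: (odd a); case: (odd b); rewrite ?expr0 ?expr1 ?opprK.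
Qed.

Section PairCoef.
Variables (R : realFieldType) (n : nat) (v : 'I_n.+2 -> 'cV[R]_n).

(* [pair_coef v i] is the Cramer relation of the tuple [v] with [v i] omitted,
   indexed by all of ['I_n.+2] and vanishing at [i]; the sign [(-1) ^+ i] makes it
   antisymmetric. *)
Definition pair_coef (i j : 'I_n.+2) : R :=
  if unlift i j is Some k then (-1) ^+ i * cramer_coef (omit i v) k else 0.

Lemma pair_coef_lift i k : pair_coef i (lift i k) = (-1) ^+ i * cramer_coef (omit i v) k.
Proof. by rewrite /pair_coef liftK. Qed.

Lemma pair_coef_diag i : pair_coef i i = 0.
Proof. by rewrite /pair_coef unlift_none. Qed.

Lemma pair_coef_anti i j : pair_coef i j = - pair_coef j i.
Proof.
case: (unliftP i j) => [k ej|->]; last by rewrite pair_coef_diag oppr0.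
case: (unliftP j i) => [k' ei|ij]; last by move: (neq_lift i k); rewrite -ej ij eqxx.
rewrite [X in pair_coef i X]ej [X in pair_coef j X]ei !pair_coef_lift.
rewrite /cramer_coef !mulrA -!exprD.
rewrite (signr_oddD _ (odd_lift_swap (esym ej) (esym ei))) mulNr; congr (- (_ * _)).
by congr (\det (colsmx _)); apply: functional_extensionality => a;
  rewrite /omit (lift_lift_swap _ (esym ej) (esym ei)).
Qed.

Lemma pair_coef_relation i : \sum_j pair_coef i j *: v j = 0.
Proof.
rewrite (bigD1_ord i) //= pair_coef_diag scale0r add0r.
under eq_bigr => k _ do rewrite pair_coef_lift -scalerA.
by rewrite -scaler_sumr (cramer_relation (omit i v)) scaler0.
Qed.

Hypothesis hv : hereditarily_spanning v.

Lemma pair_coef_neq0 i j : i != j -> pair_coef i j != 0.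
Proof.
case: (unliftP i j) => [k ->|->]; last by rewrite eqxx.
move=> _; rewrite pair_coef_lift mulf_neq0 ?signr_eq0 //.
exact/cramer_coef_neq0/hereditarily_spanning_omit.
Qed.

Lemma relation_eq0 (rho : 'I_n.+2 -> R) i m : i != m -> rho i = 0 -> rho m = 0 ->
  \sum_j rho j *: v j = 0 -> forall l, rho l = 0.
Proof.
case: (unliftP i m) => [m' ->|->]; last by rewrite eqxx.
move=> _ ri rm; rewrite (bigD1_ord i) //= ri scale0r add0r.
rewrite (bigD1_ord m') //= rm scale0r add0r.
have dv := det_colsmx_omit_neq0 m' (hereditarily_spanning_omit i hv).
move=> /(det_colsmx_relation_eq0 dv) rho0 l.
case: (unliftP i l) => [l' ->|->] //.
by case: (unliftP m' l') => [a ->|->] //; apply: rho0.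
Qed.

(* As a function of [l], the difference of the two sides is a relation of [v]
   vanishing at [i] and [m]. *)
Lemma pair_coef_plucker i m j l :
  pair_coef i m * pair_coef j l =
  pair_coef j m * pair_coef i l + pair_coef i j * pair_coef m l.
Proof.
have [->|im] := eqVneq i m.
  by rewrite pair_coef_diag mul0r (pair_coef_anti m j) mulNr addrN.
pose rho x := pair_coef i m * pair_coef j x - pair_coef j m * pair_coef i x
              - pair_coef i j * pair_coef m x.
have rhov : \sum_x rho x *: v x = 0.
  under eq_bigr => x _ do rewrite /rho !scalerBl -!scalerA.
  by rewrite !sumrB -!scaler_sumr !pair_coef_relation !scaler0 !subr0.
have rhoi : rho i = 0.
  rewrite /rho pair_coef_diag mulr0 subr0 (pair_coef_anti j i) (pair_coef_anti m i).
  by rewrite !mulrN opprK [pair_coef i j * _]mulrC addNr.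
have rhom : rho m = 0 by rewrite /rho pair_coef_diag mulr0 subr0 mulrC subrr.
have /eqP := relation_eq0 im rhoi rhom rhov l.
by rewrite subr_eq0 subr_eq addrC => /eqP.
Qed.
End PairCoef.

Lemma forall_liftP n (i : 'I_n.+1) (P : pred 'I_n.+1) :
  reflect (forall j, j != i -> P j) [forall k, P (lift i k)].
Proof.
apply: (iffP forallP) => [hP j|hP k]; last by apply: hP; rewrite eq_sym neq_lift.
by case: (unliftP i j) => [k ->|->] //; rewrite eqxx.
Qed.

Lemma sum_indicator_uniq (R : pzSemiRingType) (I : finType) (P : pred I) :
  (forall i i', P i -> P i' -> i = i') -> \sum_i (P i)%:R = ([exists i, P i])%:R :> R.
Proof.
move=> Puniq; case: existsP => [[i0 Pi0]|noP]; last first.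
  by rewrite big1 // => i _; case: (boolP (P i)) => // Pi; case: noP; exists i.
rewrite (bigD1 i0) //= Pi0 big1 ?addr0 // => i ii0.
by case: (boolP (P i)) => // Pi; move: ii0; rewrite (Puniq _ _ Pi Pi0) eqxx.
Qed.

Section Tournament.
Variables (R : realFieldType) (N : nat) (G : 'I_N.+2 -> 'I_N.+2 -> R).
Hypothesis G_anti : forall i j, G i j = - G j i.
Hypothesis G_neq0 : forall i j, i != j -> G i j != 0.
Hypothesis G_plucker :
  forall i m j l, G i m * G j l = G j m * G i l + G i j * G m l.

Definition source i := [forall k, 0 < G i (lift i k)].
Definition sink i := [forall k, G i (lift i k) < 0].

Lemma sourceP i : reflect (forall j, j != i -> 0 < G i j) (source i).
Proof. exact: (forall_liftP i (fun j => 0 < G i j)). Qed.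

Lemma sinkP i : reflect (forall j, j != i -> G i j < 0) (sink i).
Proof. exact: (forall_liftP i (fun j => G i j < 0)). Qed.

Lemma source_uniq i i' : source i -> source i' -> i = i'.
Proof.
move=> /sourceP si /sourceP si'; apply/eqP; apply: contraT => ii'.
have : G i i' < 0 by rewrite G_anti oppr_lt0 si'.
by rewrite ltNge ltW // si // eq_sym.
Qed.

Lemma sink_uniq i i' : sink i -> sink i' -> i = i'.
Proof.
move=> /sinkP si /sinkP si'; apply/eqP; apply: contraT => ii'.
have : 0 < G i i' by rewrite G_anti oppr_gt0 si'.
by rewrite ltNge ltW // si // eq_sym.
Qed.

(* Fix [m != i]; the sink is a [k != i] minimizing [G k m / G i k], since the Plücker
   relation for [i, m, k, j] turns this minimality into [G k j < 0]. *)
Lemma source_sink i : source i -> exists k, sink k.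
Proof.
move=> /sourceP si; set m := lift i ord0.
have mi : m != i by rewrite eq_sym neq_lift.
have [k ki kmin] := @arg_minP _ R _ m (fun l => l != i) (fun l => G l m / G i l) mi.
exists k; apply/sinkP => j jk.
have [->|ji] := eqVneq j i; first by rewrite G_anti oppr_lt0 si.
have := kmin j ji; rewrite ler_pdivlMr ?si // mulrAC ler_pdivrMr ?si // => kj.
have : G i m * G k j <= 0.
  by rewrite G_plucker (G_anti m j) mulrN subr_le0 [G i k * _]mulrC.
by rewrite pmulr_rle0 ?si // lt_neqAle => ->; rewrite andbT G_neq0 // eq_sym.
Qed.
End Tournament.

Lemma sumr_source_sink (R : realFieldType) N (G : 'I_N.+2 -> 'I_N.+2 -> R) :
  (forall i j, G i j = - G j i) -> (forall i j, i != j -> G i j != 0) ->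
  (forall i m j l, G i m * G j l = G j m * G i l + G i j * G m l) ->
  \sum_i ((source G i)%:R - (sink G i)%:R) = 0 :> R.
Proof.
move=> G_anti G_neq0 G_plucker.
rewrite sumrB !sum_indicator_uniq; [|exact: sink_uniq|exact: source_uniq].
suff -> : [exists i, sink G i] = [exists i, source G i] by rewrite subrr.
pose G' i j := - G i j.
have sourceG' i : source G' i = sink G i by apply: eq_forallb => k; rewrite oppr_gt0.
apply/existsP/existsP => [[i si]|[i si]]; last exact: source_sink si.
have G'_anti a b : G' a b = - G' b a by rewrite /G' G_anti.
have G'_neq0 a b : a != b -> G' a b != 0 by move=> ab; rewrite oppr_eq0 G_neq0.
have G'_plucker a m b l : G' a m * G' b l = G' b m * G' a l + G' a b * G' m l.
  by rewrite /G' !mulrNN G_plucker.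
have [k sk] : exists k, sink G' k.
  by apply: (source_sink G'_anti G'_neq0 G'_plucker (i := i)); rewrite sourceG'.
by exists k; move: sk; rewrite /sink (eq_forallb (fun a => oppr_lt0 _)).
Qed.

(** * The coboundary of Sm *)

Lemma sum_ffun_lift (V : nmodType) k (i : 'I_k.+1) (F : {ffun 'I_k -> bool} -> V) :
  \sum_(t : {ffun 'I_k.+1 -> bool}) F [ffun j => t (lift i j)] = (\sum_s F s) *+ 2.
Proof.
pose h (p : bool * {ffun 'I_k -> bool}) : {ffun 'I_k.+1 -> bool} :=
  [ffun x => if unlift i x is Some j then p.2 j else p.1].
have hK p : [ffun j => h p (lift i j)] = p.2 by apply/ffunP => j; rewrite !ffunE liftK.
have h_bij : bijective h.
  exists (fun t : {ffun 'I_k.+1 -> bool} =>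
            (t i, [ffun j => t (lift i j)] : {ffun 'I_k -> bool})) => [[b s]|t].
    by rewrite (hK (b, s)) /h ffunE unlift_none.
  by apply/ffunP => x; rewrite /h ffunE; case: (unliftP i x) => [j ->|->]; rewrite ?ffunE.
rewrite (reindex h) /=; last exact: onW_bij.
under eq_bigr => p _ do rewrite hK.
by rewrite -(pair_big xpredT xpredT (fun _ s => F s)) big_bool /= mulr2n.
Qed.

Section Cocycle.
Variables (R : realFieldType) (n : nat).

Lemma cobound_Ssimp_eq0 (v : 'I_n.+2 -> 'cV[R]_n) :
  hereditarily_spanning v -> cobound (@Ssimp R n) v = 0.
Proof.
move=> hv; rewrite -(sumr_source_sink (@pair_coef_anti _ _ v) (pair_coef_neq0 hv)
  (pair_coef_plucker hv)).
apply: eq_bigr => i _; rewrite Ssimp_cramer; last exact: hereditarily_spanning_omit.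
rewrite -sign_pattern_signr /sign_pattern /source /sink.
by congr ((_ : bool)%:R - (_ : bool)%:R); apply: eq_forallb => k; rewrite pair_coef_lift.
Qed.

Lemma omit_sign_change k (t : {ffun 'I_k.+1 -> bool}) (v : 'I_k.+1 -> 'cV[R]_n) i :
  omit i (sign_change t v) = sign_change [ffun j => t (lift i j)] (omit i v).
Proof. by apply: functional_extensionality => j; rewrite /sign_change ffunE. Qed.

Lemma hereditarily_spanning_sign_change k (t : {ffun 'I_k -> bool}) (v : 'I_k -> 'cV[R]_n) :
  hereditarily_spanning v -> hereditarily_spanning (sign_change t v).
Proof.
by apply: hereditarily_spanning_scale => i; case: (t i); rewrite ?oppr_eq0 oner_eq0.
Qed.

Lemma Sm_omit (v : 'I_n.+2 -> 'cV[R]_n) i :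
  Sm (omit i v) = (2 ^+ n.+2)^-1 * \sum_t Ssimp (omit i (sign_change t v)).
Proof.
under eq_bigr => t _ do rewrite omit_sign_change.
rewrite (@sum_ffun_lift _ _ i (fun s => Ssimp (sign_change s (omit i v)))).
rewrite SmE -[(\sum_s _) *+ 2]mulr_natl [2 ^+ n.+2]exprS invfM.
by rewrite -mulrA mulrCA mulKf // pnatr_eq0.
Qed.

Lemma cobound_Sm (v : 'I_n.+2 -> 'cV[R]_n) :
  cobound (@Sm R n) v = (2 ^+ n.+2)^-1 * \sum_t cobound (@Ssimp R n) (sign_change t v).
Proof.
rewrite /cobound; under eq_bigr => i _ do rewrite Sm_omit mulrCA mulr_sumr.
by rewrite -mulr_sumr exchange_big.
Qed.
End Cocycle.

Theorem lemma8p2 (R : realFieldType) (n : nat) (hn : ~~ odd n) :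
  (forall (v : 'I_n.+1 -> 'cV[R]_n) (c : 'I_n.+1 -> R),
      (forall i, v i != 0) -> (forall i, c i != 0) ->
      Sm (fun i => c i *: v i) = Sm v) /\
  (forall (g : 'M[R]_n) (v : 'I_n.+1 -> 'cV[R]_n), g \in unitmx ->
      Sm (fun i => g *m v i) = Num.sg (\det g) * Sm v) /\
  (forall v : 'I_n.+2 -> 'cV[R]_n,
      hereditarily_spanning v -> cobound (@Sm R n) v = 0).
Proof.
split; first by move=> v c _; apply: Sm_scale.
split; first by move=> g v; apply: Sm_mulmx.
move=> v hv; rewrite cobound_Sm big1 ?mulr0 // => t _.
exact/cobound_Ssimp_eq0/hereditarily_spanning_sign_change.
Qed.
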